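(* Let $\mathcal{H}$ be a $K$-vector space and $\Delta:\mathcal{H}\to\mathcal{H}\otimes\mathcal{H}$ a linear map such that $\Delta^{(2)}=(\mathrm{id}\otimes\tau)\Delta^{(2)}$. Then for every $n\geq 1$ and every $\sigma\in\Sigma_n$, one has $(\mathrm{id}_{\mathcal{H}}\otimes\sigma)\circ\Delta^{(n)}=\Delta^{(n)}$, where $\sigma$ acts on $\mathcal{H}^{\otimes n}$ by permuting the tensor factors; i.e. the last $n$ tensor components of $\Delta^{(n)}(x)\in\mathcal{H}^{\otimes(n+1)}$ are invariant under $\Sigma_n$.
   Context: $K$ is a field of characteristic zero. $\tau$ is the flip $a\otimes b\mapsto b\otimes a$ on $\mathcal{H}\otimes\mathcal{H}$, so $\mathrm{id}\otimes\tau$ flips the last two factors of $\mathcal{H}^{\otimes 3}$. The iterates are defined by $\Delta^{(1)}=\Delta$ and $\Delta^{(n)}=(\Delta\otimes\mathrm{id}^{\otimes(n-1)})\circ\Delta^{(n-1)}:\mathcal{H}\to\mathcal{H}^{\otimes(n+1)}$; in particular $\Delta^{(2)}=(\Delta\otimes\mathrm{id})\Delta$. *)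

(* Tensor powers H^{\otimes m} of a K-vector space H are
   modelled as formal finite sums  sum_k a_k * (h_{k,0} (x) ... (x) h_{k,m-1})
   (lists of pairs (scalar, m-tuple of vectors)), two such sums being equal
   in H^{\otimes m} iff they have the same image under every multilinear map
   H^m -> V into every K-vector space V (universal property of the tensor
   product). *)
From HB Require Import structures.
From mathcomp Require Import all_boot all_order all_algebra.
From mathcomp Require Import fingroup perm.
Set Implicit Arguments. Unset Strict Implicit. Unset Printing Implicit Defensive.
Import GRing.Theory.
Local Open Scope ring_scope.

Section Tensors.
Variables (K : fieldType) (H : lmodType K).

Definition pretensor (m : nat) := seq (K * {ffun 'I_m -> H}).

Definition fupd m (t : {ffun 'I_m -> H}) (i : 'I_m) (x : H) : {ffun 'I_m -> H} :=
  [ffun j => if j == i then x else t j].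

Definition multilinear m (V : lmodType K) (phi : {ffun 'I_m -> H} -> V) :=
  forall (i : 'I_m) (t : {ffun 'I_m -> H}) (a : K) (x y : H),
    phi (fupd t i (a *: x + y)) = a *: phi (fupd t i x) + phi (fupd t i y).

Definition teval m (V : lmodType K) (phi : {ffun 'I_m -> H} -> V)
  (s : pretensor m) : V := \sum_(p <- s) p.1 *: phi p.2.

Definition teq m (s s' : pretensor m) : Prop :=
  forall (V : lmodType K) (phi : {ffun 'I_m -> H} -> V),
    multilinear phi -> teval phi s = teval phi s'.

Definition tscale m (a : K) (s : pretensor m) : pretensor m :=
  [seq (a * p.1, p.2) | p <- s].
Definition tadd m (s s' : pretensor m) : pretensor m := s ++ s'.

Definition lin_coprod (Delta : H -> pretensor 2) :=
  forall (a : K) (x y : H),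
    teq (Delta (a *: x + y)) (tadd (tscale a (Delta x)) (Delta y)).

(* u_0 (x) u_1 (x) t_1 (x) ... (x) t_m *)
Definition first_split m (t : {ffun 'I_m.+1 -> H}) (u : {ffun 'I_2 -> H})
  : {ffun 'I_m.+2 -> H} :=
  [ffun j : 'I_m.+2 => if (j < 2)%N then u (inord j) else t (inord j.-1)].

(* Delta (x) id^{(x) m} : H^{(x) m+1} -> H^{(x) m+2} *)
Definition DeltaL (Delta : H -> pretensor 2) m (s : pretensor m.+1)
  : pretensor m.+2 :=
  flatten [seq [seq (p.1 * q.1, first_split p.2 q.2) | q <- Delta (p.2 ord0)]
          | p <- s].

(* coprod_iter Delta k = Delta^{(k+1)} : H -> H^{(x) (k+2)} *)
Fixpoint coprod_iter (Delta : H -> pretensor 2) (k : nat) : H -> pretensor k.+2 :=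
  match k with
  | 0 => Delta
  | k'.+1 => fun x => DeltaL Delta (coprod_iter Delta k' x)
  end.

(* id_H (x) sigma, sigma permuting the last k+1 tensor factors *)
Definition permL k (sigma : 'S_k.+1) (s : pretensor k.+2) : pretensor k.+2 :=
  [seq (p.1, [ffun j : 'I_k.+2 =>
               if unlift ord0 j is Some i then p.2 (lift ord0 (sigma i))
               else p.2 ord0]) | p : K * {ffun 'I_k.+2 -> H} <- s].

(* id (x) tau on H^{(x) 3}: swaps the last two factors *)
Definition flip23 (s : pretensor 3) : pretensor 3 :=
  [seq (p.1, [ffun j : 'I_3 =>
               p.2 (if val j == 1%N then inord 2 else if val j == 2%N then inord 1 else j)])
  | p : K * {ffun 'I_3 -> H} <- s].

End Tensors.
Arguments coprod_iter {K H} Delta k.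
Arguments permL {K H k} sigma s.
Arguments DeltaL {K H} Delta {m} s.

From mathcomp Require Import all_boot all_order all_algebra.
From mathcomp Require Import fingroup perm.
Set Implicit Arguments. Unset Strict Implicit. Unset Printing Implicit Defensive.
Import GRing.Theory.
Local Open Scope ring_scope.

(* A formal tensor is invariant under a permutation of its factors when every
   multilinear map takes the same value on it and on its permuted version; the
   permutations leaving Delta^(n)(x) invariant thus form a submonoid of the
   symmetric group.  As Delta^(n+1) = (Delta (x) id) Delta^(n) only touches the
   first factor, a permutation of the last n factors of Delta^(n)(x) that leaves
   it invariant yields one of Delta^(n+1)(x) fixing its first two factors.  The
   transposition of the second and third factors of Delta^(n+1)(x) is an
   invariance because Delta^(n+1) = (Delta^(2) (x) id) Delta^(n-1), so the
   hypothesis Delta^(2) = (id (x) tau) Delta^(2) applies on the first factor.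
   Since Sigma_(n+1) is generated by the permutations fixing its first point and
   the transposition (1 2), induction on n concludes. *)

Lemma lift_perm_tperm n (a b : 'I_n) :
  lift_perm ord0 ord0 (tperm a b) = tperm (lift ord0 a) (lift ord0 b) :> 'S_n.+1.
Proof.
apply/permP=> k; case: (unliftP ord0 k) => [k'|] ->.
  by rewrite lift_perm_lift inj_tperm //; apply: lift_inj.
by rewrite lift_perm_id tpermD // eq_sym neq_lift.
Qed.

Lemma perm_ind_lift_swap n (P : 'S_n.+2 -> Prop) :
  (forall s t, P s -> P t -> P (s * t)%g) ->
  (forall s : 'S_n.+1, P (lift_perm ord0 ord0 s)) ->
  P (tperm ord0 (lift ord0 ord0)) ->
  forall s, P s.
Proof.
move=> PM Plift Pswap.
have P1 : P 1%g by rewrite -(lift_perm1 ord0).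
have Plift_tperm (a b : 'I_n.+1) : P (tperm (lift ord0 a) (lift ord0 b)).
  by rewrite -lift_perm_tperm.
have P0 (b : 'I_n.+2) : P (tperm ord0 b).
  case: (unliftP ord0 b) => [b'|] ->; last by rewrite tperm1.
  case: (unliftP ord0 b') => [c|] ->; last exact: Pswap.
  (* conjugate (0 1) by (1 c+2), a lift since it fixes 0 *)
  set s1 := tperm (lift ord0 ord0) (lift ord0 (lift ord0 c)).
  have -> : tperm ord0 (lift ord0 (lift ord0 c)) = (s1 * (tperm ord0 (lift ord0 ord0) * s1))%g.
    have := tpermJ ord0 (lift ord0 ord0) s1.
    by rewrite /conjg tpermV tpermL tpermD ?(eq_sym ord0) ?neq_lift.
  have Ps1 : P s1 by exact: Plift_tperm.
  by apply: (PM) => //; apply: (PM).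
have Ptperm (a b : 'I_n.+2) : P (tperm a b).
  case: (unliftP ord0 a) => [a'|] ->; last exact: P0.
  case: (unliftP ord0 b) => [b'|] ->; last by rewrite tpermC.
  exact: Plift_tperm.
move=> s; case: (prod_tpermP s) => ts -> _.
by elim: ts => [|t ts IH]; rewrite ?big_nil ?big_cons //; apply: (PM).
Qed.

Section TensorInvariance.
Variables (K : fieldType) (H : lmodType K).

Lemma teval_tadd_tscale m (V : lmodType K) (phi : {ffun 'I_m -> H} -> V)
  (a : K) (s s' : pretensor H m) :
  teval phi (tadd (tscale a s) s') = a *: teval phi s + teval phi s'.
Proof.
rewrite /teval /tadd /tscale big_cat big_map scaler_sumr; congr (_ + _).
by apply: eq_bigr => p _; rewrite scalerA.
Qed.

Lemma eq_teval m (V : lmodType K) (phi psi : {ffun 'I_m -> H} -> V)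
  (s : pretensor H m) : phi =1 psi -> teval phi s = teval psi s.
Proof. by move=> phi_psi; apply: eq_bigr => p _; rewrite phi_psi. Qed.

Lemma multilinear_comp m n (V : lmodType K) (phi : {ffun 'I_n -> H} -> V)
  (g : {ffun 'I_m -> H} -> {ffun 'I_n -> H}) (e : 'I_m -> 'I_n) :
  (forall t i x, g (fupd t i x) = fupd (g t) (e i) x) ->
  multilinear phi -> multilinear (phi \o g).
Proof. by move=> gE phiML i t a x y /=; rewrite !gE phiML. Qed.

Definition reindex n (pi : 'S_n) (t : {ffun 'I_n -> H}) : {ffun 'I_n -> H} :=
  [ffun j => t (pi j)].

Lemma reindex1 n (t : {ffun 'I_n -> H}) : reindex 1 t = t.
Proof. by apply/ffunP => j; rewrite ffunE perm1. Qed.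

Lemma reindexM n (p q : 'S_n) (t : {ffun 'I_n -> H}) :
  reindex (p * q) t = reindex p (reindex q t).
Proof. by apply/ffunP => j; rewrite !ffunE permM. Qed.

Lemma reindex_fupd n (pi : 'S_n) t i x :
  reindex pi (fupd t i x) = fupd (reindex pi t) (pi^-1 i)%g x.
Proof.
apply/ffunP => j; rewrite !ffunE.
by rewrite -(inj_eq (@perm_inj _ pi^-1)%g) permK.
Qed.

Lemma multilinear_reindex n (V : lmodType K) (phi : {ffun 'I_n -> H} -> V)
  (pi : 'S_n) : multilinear phi -> multilinear (phi \o reindex pi).
Proof. exact/multilinear_comp/reindex_fupd. Qed.

Definition perm_invariant n (pi : 'S_n) (s : pretensor H n) :=
  forall (V : lmodType K) (phi : {ffun 'I_n -> H} -> V),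
    multilinear phi -> teval (phi \o reindex pi) s = teval phi s.

Lemma perm_invariant1 n (s : pretensor H n) : perm_invariant 1 s.
Proof. by move=> V phi _; apply: eq_teval => t /=; rewrite reindex1. Qed.

Lemma perm_invariantM n (p q : 'S_n) (s : pretensor H n) :
  perm_invariant p s -> perm_invariant q s -> perm_invariant (p * q) s.
Proof.
move=> Ip Iq V phi phiML.
rewrite -[RHS](Ip _ _ phiML) -(Iq _ _ (multilinear_reindex p phiML)).
by apply: eq_teval => t /=; rewrite reindexM.
Qed.

Lemma teval_permL k (V : lmodType K) (phi : {ffun 'I_k.+2 -> H} -> V)
  (sigma : 'S_k.+1) (s : pretensor H k.+2) :
  teval phi (permL sigma s) = teval (phi \o reindex (lift_perm ord0 ord0 sigma)) s.
Proof.
rewrite /teval /permL big_map; apply: eq_bigr => p _ /=; congr (_ *: phi _).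
apply/ffunP => j; rewrite !ffunE permE /lift_perm_fun.
by case: (unlift ord0 j).
Qed.

Lemma first_split_fupd_r m (t : {ffun 'I_m.+1 -> H}) (u : {ffun 'I_2 -> H}) i x :
  first_split t (fupd u i x) = fupd (first_split t u) (inord i) x.
Proof.
have le_i : (i <= m.+1)%N by case: i => [[|[|]]].
apply/ffunP => j; rewrite !ffunE; case: ltnP => j2.
  by rewrite -!val_eqE /= !inordK.
suff /negbTE -> : j != inord i :> 'I_m.+2 by [].
by rewrite -val_eqE /= inordK //; apply: contraTneq j2 => ->; rewrite -ltnNge.
Qed.

Lemma first_split_fupd0 m (t : {ffun 'I_m.+1 -> H}) (u : {ffun 'I_2 -> H}) x :
  first_split (fupd t ord0 x) u = first_split t u.
Proof.
apply/ffunP => j; rewrite !ffunE; case: ltnP => //= j2.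
suff /negbTE -> : inord j.-1 != ord0 :> 'I_m.+1 by [].
rewrite -val_eqE /= inordK; first by case: (j) j2 => [[|[|]]].
by case: j j2 => [[|[|j]]] //= /ltnSE.
Qed.

Lemma first_split_fupd_lift m (t : {ffun 'I_m.+1 -> H}) (u : {ffun 'I_2 -> H})
  (i : 'I_m) x :
  first_split (fupd t (lift ord0 i) x) u
  = fupd (first_split t u) (lift ord0 (lift ord0 i)) x.
Proof.
apply/ffunP => j; rewrite !ffunE; case: ltnP => j2.
  suff /negbTE -> : j != lift ord0 (lift ord0 i) by [].
  by rewrite -val_eqE /= /bump !leq0n; case: (j) j2 => [[|[|]]].
rewrite -!val_eqE /= /bump !leq0n /= inordK; first by case: (j) j2 => [[|[|]]].
by case: j j2 => [[|[|j]]] //= /ltnSE.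
Qed.

Lemma reindex_first_split k (s : 'S_k.+1) (t : {ffun 'I_k.+2 -> H})
  (u : {ffun 'I_2 -> H}) :
  reindex (lift_perm ord0 ord0 (lift_perm ord0 ord0 s)) (first_split t u)
  = first_split (reindex (lift_perm ord0 ord0 s) t) u.
Proof.
have liftE (j : 'I_k.+1) : inord (lift ord0 (lift ord0 j)).-1 = lift ord0 j :> 'I_k.+2.
  by apply: val_inj; rewrite /= inordK // /bump leq0n add1n ltnS ltn_ord.
apply/ffunP => j; rewrite !ffunE.
case: (unliftP ord0 j) => [j1|] ->; last by rewrite lift_perm_id.
rewrite lift_perm_lift; case: (unliftP ord0 j1) => [j2|] ->; last by rewrite lift_perm_id.
by rewrite lift_perm_lift !lift0 /= !liftE lift_perm_lift.
Qed.

Variable Delta : H -> pretensor H 2.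
Hypothesis Delta_lin : lin_coprod Delta.
Hypothesis Delta_cocomm :
  forall x, teq (flip23 (coprod_iter Delta 1 x)) (coprod_iter Delta 1 x).

Definition coprodL_dual m (V : lmodType K) (phi : {ffun 'I_m.+2 -> H} -> V)
  (t : {ffun 'I_m.+1 -> H}) : V :=
  teval (phi \o first_split t) (Delta (t ord0)).

Lemma teval_DeltaL m (V : lmodType K) (phi : {ffun 'I_m.+2 -> H} -> V)
  (s : pretensor H m.+1) :
  teval phi (DeltaL Delta s) = teval (coprodL_dual phi) s.
Proof.
rewrite /teval /DeltaL big_flatten /= big_map; apply: eq_bigr => p _.
by rewrite big_map scaler_sumr; apply: eq_bigr => q _; rewrite scalerA.
Qed.

Lemma multilinear_coprodL_dual m (V : lmodType K) (phi : {ffun 'I_m.+2 -> H} -> V) :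
  multilinear phi -> multilinear (coprodL_dual phi).
Proof.
move=> phiML i t a x y; rewrite /coprodL_dual.
case: (unliftP ord0 i) => [i'|] ->.
  have t0E z : fupd t (lift ord0 i') z ord0 = t ord0.
    by rewrite ffunE (negbTE (neq_lift _ _)).
  rewrite !t0E /teval scaler_sumr -big_split; apply: eq_bigr => q _ /=.
  by rewrite !first_split_fupd_lift phiML scalerDr !scalerA mulrC.
have split0E z : phi \o first_split (fupd t ord0 z) =1 phi \o first_split t.
  by move=> u /=; rewrite first_split_fupd0.
rewrite !ffunE !eqxx !(eq_teval _ (split0E _)) -teval_tadd_tscale.
apply: Delta_lin; apply: multilinear_comp phiML; exact: first_split_fupd_r.
Qed.

Lemma perm_invariant_DeltaL_lift k (sigma : 'S_k.+1) (s : pretensor H k.+2) :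
  perm_invariant (lift_perm ord0 ord0 sigma) s ->
  perm_invariant (lift_perm ord0 ord0 (lift_perm ord0 ord0 sigma)) (DeltaL Delta s).
Proof.
move=> s_inv V phi phiML; rewrite !teval_DeltaL.
rewrite -(s_inv _ _ (multilinear_coprodL_dual phiML)).
apply: eq_teval => t; rewrite /coprodL_dual /= ffunE lift_perm_id.
by apply: eq_teval => u; rewrite /= reindex_first_split.
Qed.

Definition swap12 m : 'S_m.+3 := lift_perm ord0 ord0 (tperm ord0 (lift ord0 ord0)).

Lemma swap12E m (j : 'I_m.+3) :
  swap12 m j = (if j == 1 :> nat then 2 else if j == 2 :> nat then 1 else j)%N :> nat.
Proof.
rewrite /swap12; case: (unliftP ord0 j) => [j1|] ->; last by rewrite lift_perm_id.
rewrite lift_perm_lift !lift0 permE /=.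
by case: j1 => [[|[|v]] hv]; rewrite -!val_eqE /= ?lift0.
Qed.

Lemma teval_flip23 (V : lmodType K) (phi : {ffun 'I_3 -> H} -> V) (s : pretensor H 3) :
  teval phi (flip23 s) = teval (phi \o reindex (swap12 0)) s.
Proof.
rewrite /teval /flip23 big_map; apply: eq_bigr => p _ /=; congr (_ *: phi _).
apply/ffunP => j; rewrite !ffunE; congr (p.2 _); apply: val_inj; rewrite /= swap12E.
by case: j => [[|[|[|j]]] hj] //=; rewrite inordK.
Qed.

Definition glue3 m (w : {ffun 'I_3 -> H}) (t : {ffun 'I_m.+1 -> H})
  : {ffun 'I_m.+3 -> H} :=
  [ffun j : 'I_m.+3 => if (j < 3)%N then w (inord j) else t (inord j.-2)].

Lemma first_split_first_split m (t : {ffun 'I_m.+1 -> H}) (u v : {ffun 'I_2 -> H}) :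
  first_split (first_split t u) v = glue3 (first_split u v) t.
Proof. by apply/ffunP => -[[|[|[|j]]] lt_j]; rewrite !ffunE /= ?inordK. Qed.

Lemma glue3_fupd m (t : {ffun 'I_m.+1 -> H}) (w : {ffun 'I_3 -> H}) i x :
  glue3 (fupd w i x) t = fupd (glue3 w t) (inord i) x.
Proof.
have le_i : (i <= m.+2)%N by case: i => [[|[|[|]]]].
apply/ffunP => j; rewrite !ffunE; case: ltnP => j3.
  by rewrite -!val_eqE /= !inordK.
suff /negbTE -> : j != inord i :> 'I_m.+3 by [].
by rewrite -val_eqE /= inordK //; apply: contraTneq j3 => ->; rewrite -ltnNge.
Qed.

Lemma reindex_glue3 m (t : {ffun 'I_m.+1 -> H}) (w : {ffun 'I_3 -> H}) :
  reindex (swap12 m) (glue3 w t) = glue3 (reindex (swap12 0) w) t.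
Proof.
apply/ffunP => j; rewrite !ffunE swap12E.
by case: j => [[|[|[|j]]] lt_j]; rewrite /= ?ffunE; congr (_ _); apply: val_inj;
  rewrite /= ?swap12E ?inordK.
Qed.

Lemma coprodL_dual2 m (V : lmodType K) (phi : {ffun 'I_m.+3 -> H} -> V)
  (t : {ffun 'I_m.+1 -> H}) :
  coprodL_dual (coprodL_dual phi) t
  = teval (fun w => phi (glue3 w t)) (coprod_iter Delta 1 (t ord0)).
Proof.
rewrite /= teval_DeltaL; apply: eq_teval => u /=; rewrite /coprodL_dual.
have -> : first_split t u ord0 = u ord0.
  by rewrite ffunE; congr (u _); apply: val_inj; rewrite /= inordK.
by apply: eq_teval => v /=; rewrite first_split_first_split.
Qed.

Lemma perm_invariant_DeltaL2_swap12 m (s : pretensor H m.+1) :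
  perm_invariant (swap12 m) (DeltaL Delta (DeltaL Delta s)).
Proof.
move=> V phi phiML; rewrite !teval_DeltaL; apply: eq_teval => t; rewrite !coprodL_dual2.
transitivity (teval ((fun w => phi (glue3 w t)) \o reindex (swap12 0))
                    (coprod_iter Delta 1 (t ord0))).
  by apply: eq_teval => w /=; rewrite reindex_glue3.
rewrite -teval_flip23; apply: Delta_cocomm.
by apply: multilinear_comp phiML; exact: glue3_fupd.
Qed.

Lemma coprod_iter_swap12_invariant k x :
  perm_invariant (swap12 k) (coprod_iter Delta k.+1 x).
Proof.
case: k => [|k]; last exact: perm_invariant_DeltaL2_swap12.
by move=> V phi phiML; rewrite -teval_flip23; apply: Delta_cocomm.
Qed.

Lemma coprod_iter_perm_invariant k (sigma : 'S_k.+1) x :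
  perm_invariant (lift_perm ord0 ord0 sigma) (coprod_iter Delta k x).
Proof.
elim: k sigma => [|k IH] sigma.
  have -> : sigma = 1%g by apply/permP => i; rewrite perm1 (ord1 (sigma i)) (ord1 i).
  by rewrite lift_perm1; apply: perm_invariant1.
pose P s := perm_invariant (lift_perm ord0 ord0 s) (coprod_iter Delta k.+1 x).
apply: (@perm_ind_lift_swap _ P) => [p q|s|].
- by rewrite /P -(lift_permM ord0 ord0 ord0); apply: perm_invariantM.
- exact: perm_invariant_DeltaL_lift (IH s).
- exact: coprod_iter_swap12_invariant.
Qed.

End TensorInvariance.

Unset Implicit Arguments.

Theorem lemma3p1 (K : fieldType) (H : lmodType K)
  (charK0 : [pchar K] =i pred0)
  (Delta : H -> pretensor H 2)
  (Delta_lin : lin_coprod Delta)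
  (Hcocomm : forall x : H, teq (flip23 (coprod_iter Delta 1 x)) (coprod_iter Delta 1 x)) :
  forall (k : nat) (sigma : 'S_k.+1) (x : H),
    teq (permL sigma (coprod_iter Delta k x)) (coprod_iter Delta k x).
Proof.
move=> k sigma x V phi phiML; rewrite teval_permL.
exact: coprod_iter_perm_invariant.
Qed.
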